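(* Let $\mu$ be a signature and let $\mathcal A$ be an ideal of $\Omega_\mu$. If $\mathcal A$ has the extension property, then $\mathcal A$ is representable, i.e. there is a relational structure $\mathfrak A$ of signature $\mu$ with $\mathrm{age}(\mathfrak A)=\mathcal A$.
   Context: A signature is a map $\mu:I\to\mathbb{N}^*$; a relational structure of signature $\mu$ is $\mathfrak A=(A;(R_i)_{i\in I})$ with $R_i$ a $\mu_i$-ary relation on $A$. Embeddings are injective maps preserving and reflecting all relations; $\mathfrak A\le \mathfrak B$ means $\mathfrak A$ embeds into $\mathfrak B$. $\Omega_\mu$ is the set of isomorphism types of finite structures of signature $\mu$, ordered by $\le$; an ideal is a non-empty, downward closed, up-directed subset. The age of $\mathfrak A$ is the set of isomorphism types of its finite induced substructures. For an ideal $\mathcal A$ of $\Omega_\mu$, a structure $\mathfrak A$ of signature $\mu$ (of any cardinality) with $\mathrm{age}(\mathfrak A)\subseteq\mathcal A$ is extendable w.r.t. $\mathcal A$ if for every $\mathfrak B\in\mathcal A$ there is a structure $\mathfrak C$ with $\mathrm{age}(\mathfrak C)\subseteq\mathcal A$ which extends both $\mathfrak A$ and $\mathfrak B$ (both embed into $\mathfrak C$). $\mathcal A$ has the extension property if every structure $\mathfrak A$ of signature $\mu$ with $|A|<\kappa:=|\mathcal A|$ and $\mathrm{age}(\mathfrak A)\subseteq\mathcal A$ is extendable w.r.t. $\mathcal A$. *)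

From mathcomp Require Import all_boot.
Set Implicit Arguments.
Unset Strict Implicit.
Unset Printing Implicit Defensive.

(* A signature is mu : I -> nat with every arity >= 1 (hypothesis in the
   theorem). *)
Record structure (I : Type) (mu : I -> nat) := Struct {
  carrier :> Type;
  rel : forall i : I, ('I_(mu i) -> carrier) -> Prop }.

Definition embedding I (mu : I -> nat) (A B : structure mu)
  (f : carrier A -> carrier B) : Prop :=
  injective f /\
  forall (i : I) (x : 'I_(mu i) -> carrier A),
    @rel I mu A i x <-> @rel I mu B i (fun k => f (x k)).

Arguments embedding {I mu} A B f.

Definition embeds I (mu : I -> nat) (A B : structure mu) : Prop :=
  exists f : carrier A -> carrier B, embedding A B f.

(* Finite structures of signature mu, with carrier {0,..,n-1}.  Every finite
   structure is isomorphic to one of these; isomorphism types of finite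
   structures are the isomorphism classes of these. *)
Record finstr (I : Type) (mu : I -> nat) := FinStr {
  fsize : nat;
  frel : forall i : I, ('I_(mu i) -> 'I_fsize) -> Prop }.

Definition fs_struct I (mu : I -> nat) (s : finstr mu) : structure mu :=
  @Struct I mu 'I_(fsize s) (@frel I mu s).

Definition fle I (mu : I -> nat) (s t : finstr mu) : Prop :=
  embeds (fs_struct s) (fs_struct t).

Definition fiso I (mu : I -> nat) (s t : finstr mu) : Prop :=
  exists f : 'I_(fsize s) -> 'I_(fsize t),
    embedding (fs_struct s) (fs_struct t) f /\ (forall y, exists x, f x = y).

(* A subset of Omega_mu is represented by a predicate on finite structures;
   for ideals (downward closed) this predicate is automatically closed under
   isomorphism, so it is exactly a set of isomorphism types. *)
Definition ideal I (mu : I -> nat) (A : finstr mu -> Prop) : Prop :=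
  (exists s, A s) /\
  (forall s t, fle s t -> A t -> A s) /\
  (forall s t, A s -> A t -> exists u, A u /\ fle s u /\ fle t u).

(* age(C): the isomorphism types of the finite induced substructures of C,
   i.e. the finite structures embeddable in C. *)
Definition in_age I (mu : I -> nat) (C : structure mu) (s : finstr mu) : Prop :=
  embeds (fs_struct s) C.

Definition age_sub I (mu : I -> nat) (C : structure mu)
  (A : finstr mu -> Prop) : Prop :=
  forall s, in_age C s -> A s.

Definition isotype_in I (mu : I -> nat) (A : finstr mu -> Prop) : Type :=
  { P : finstr mu -> Prop | exists s, A s /\ P = fiso s }.

(* |carrier C| < |A| : there is no injection from A (the set of isomorphism
   types) into the carrier of C. *)
Definition card_lt I (mu : I -> nat) (C : structure mu)
  (A : finstr mu -> Prop) : Prop :=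
  ~ exists f : isotype_in A -> carrier C, injective f.

Definition extendable I (mu : I -> nat) (A : finstr mu -> Prop)
  (C : structure mu) : Prop :=
  forall B, A B ->
    exists D : structure mu,
      age_sub D A /\ embeds C D /\ embeds (fs_struct B) D.

Definition extension_property I (mu : I -> nat) (A : finstr mu -> Prop) : Prop :=
  forall C : structure mu, card_lt C A -> age_sub C A -> extendable A C.

Definition representable I (mu : I -> nat) (A : finstr mu -> Prop) : Prop :=
  exists C : structure mu, forall s, in_age C s <-> A s.

(* If A has finitely many isomorphism types, directedness yields a single
   finite structure above all of them.  Otherwise, fix a well-founded total
   order on the types of A in which no initial segment, even with each point
   replaced by finitely many points, is as large as A: take any well-order and
   fold it onto the segment below its least point y such that A injects into
   (segment below y) x nat.  Along this order build a chain of structures with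
   age in A: each stage is the union of the earlier ones, hence of size < |A|,
   extended by the extension property so as to contain the current type.  The
   union of the chain has age in A, since a finite substructure already lies in
   one stage, and it contains every type of A. *)

From Pilot Require Import Defs.
From mathcomp Require Import all_boot.
From mathcomp Require Import boolp wochoice.
From Stdlib Require Import Inverse_Image.
Set Implicit Arguments.
Unset Strict Implicit.
Unset Printing Implicit Defensive.

Definition trichotomous (X : Type) (lt : X -> X -> Prop) :=
  forall x y, lt x y \/ x = y \/ lt y x.

Section WellFounded.
Variables (X : Type) (lt : X -> X -> Prop).
Hypothesis lt_wf : well_founded lt.

Lemma wf_asym x y : lt x y -> ~ lt y x.
Proof.
move: y; elim/(well_founded_ind lt_wf): x => x IH y ltxy ltyx.
exact: (IH y ltyx x ltyx ltxy).
Qed.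

Lemma wf_no_3cycle x y z : lt x y -> lt y z -> ~ lt z x.
Proof.
move: y z; elim/(well_founded_ind lt_wf): x => x IH y z ltxy ltyz ltzx.
exact: (IH z ltzx x y ltzx ltxy ltyz).
Qed.

Lemma wf_trichotomous_trans : trichotomous lt ->
  forall x y z, lt x y -> lt y z -> lt x z.
Proof.
move=> tri x y z ltxy ltyz; case: (tri x z) => [//|[exz|ltzx]].
  by subst z; case: (wf_asym ltxy ltyz).
by case: (wf_no_3cycle ltxy ltyz ltzx).
Qed.

Lemma wf_minimal (P : X -> Prop) :
  (exists x, P x) -> exists2 z, P z & forall y, lt y z -> ~ P y.
Proof.
move=> [x]; elim/(well_founded_ind lt_wf): x => x IH Px.
case: (pselect (exists2 y, lt y x & P y)) => [[y ltyx Py]|none].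
  exact: IH y ltyx Py.
by exists x => // y ltyx Py; apply: none; exists y.
Qed.

Definition lexlt (a b : X * nat) := lt a.1 b.1 \/ a.1 = b.1 /\ a.2 < b.2.

Lemma wf_lexlt : well_founded lexlt.
Proof.
move=> [a k]; move: k; elim/(well_founded_ind lt_wf): a => a IHa.
elim/ltn_ind => k IHk; constructor=> -[b j] [/= ltba|[/= -> ltjk]].
  exact: IHa.
exact: IHk.
Qed.

End WellFounded.

Lemma trichotomous_lexlt (X : Type) (lt : X -> X -> Prop) :
  trichotomous lt -> trichotomous (lexlt lt).
Proof.
move=> tri [a k] [b j]; rewrite /lexlt /=.
case: (tri a b) => [ltab|[<-|ltba]]; [by left; left| |by right; right; left].
case: (ltngtP k j) => [ltkj|ltjk|->]; [by left; right|by right; right; right|].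
by right; left.
Qed.

Lemma trichotomous_preim (Y X : Type) (f : Y -> X) (lt : X -> X -> Prop) :
  injective f -> trichotomous lt -> trichotomous (fun a b => lt (f a) (f b)).
Proof.
move=> f_inj tri a b.
by case: (tri (f a) (f b)) => [|[/f_inj|]]; [left|right; left|right; right].
Qed.

Lemma exists_wf_trichotomous (T : Type) :
  exists lt : T -> T -> Prop, well_founded lt /\ trichotomous lt.
Proof.
have [R R_wo] := well_ordering_principle {classic T}.
have /wo_chain_antisymmetric R_anti : wo_chain R predT by move=> A _; apply: R_wo.
pose lt x y := ~~ R y x; exists lt; split.
  move=> x; apply: contrapT => x_nacc.
  have [|z [[z_nacc z_min] _]] := R_wo [pred z | `[< ~ Acc lt z >]].
    by exists x; apply/asboolP.
  move: z_nacc; rewrite inE => /asboolP; apply; constructor=> y /negP nRzy.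
  apply: contrapT => y_nacc; apply: nRzy; apply: z_min.
  by rewrite inE; apply/asboolP.
move=> x y; case Rxy: (R x y); last by right; right; rewrite /lt Rxy.
case Ryx: (R y x); last by left; rewrite /lt Ryx.
by right; left; apply: R_anti; rewrite ?Rxy ?Ryx.
Qed.

Definition finite_type (X : Type) :=
  exists M (f : X -> nat), injective f /\ forall x, f x < M.

Lemma bounded_on_injective_section (X : Type) (P : X -> Prop) (h g : X -> nat) m :
  (forall x y, P x -> P y -> h x = h y -> x = y) ->
  exists N, forall x, P x -> h x < m -> g x < N.
Proof.
move=> h_inj; elim: m => [|m [N gN]]; first by exists 0.
case: (pselect (exists2 x, P x & h x = m)) => [[x Px hx]|none].
  exists (maxn N (g x).+1) => y Py; rewrite ltnS leq_eqVlt => /orP[/eqP hy|hy].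
    by rewrite (h_inj y x) ?hy ?hx // leq_max leqnn orbT.
  by rewrite leq_max gN.
exists N => y Py; rewrite ltnS leq_eqVlt => /orP[/eqP hy|]; last exact: gN.
by case: none; exists y.
Qed.

Lemma edivn_unique m j1 k1 j2 k2 :
  j1 < m -> j2 < m -> k1 * m + j1 = k2 * m + j2 -> j1 = j2 /\ k1 = k2.
Proof.
move=> j1m j2m e; have m_gt0 : 0 < m by apply: leq_ltn_trans j1m.
have mod_e : (k1 * m + j1) %% m = (k2 * m + j2) %% m by rewrite e.
have div_e : (k1 * m + j1) %/ m = (k2 * m + j2) %/ m by rewrite e.
rewrite !modnMDl !modn_small // in mod_e.
by rewrite !divnMDl // !divn_small // !addn0 in div_e.
Qed.

Definition injects_into_labels (S X : Type) (lt : X -> X -> Prop) (n : X -> nat) x :=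
  exists G : S -> X * nat,
    injective G /\ forall s, lt (G s).1 x /\ (G s).2 < n (G s).1.

Definition small_below (S X : Type) (lt : X -> X -> Prop) (n : X -> nat) :=
  forall x, ~ injects_into_labels S lt n x.

Section CardinalOrder.
Variables (T : Type) (ltW : T -> T -> Prop).
Hypotheses (ltW_wf : well_founded ltW) (ltW_tri : trichotomous ltW).

Definition injects_below (y : T) :=
  exists G : T -> T * nat, injective G /\ forall t, ltW (G t).1 y.

Lemma exists_injection_into_short_segments :
  exists iota : T -> T * nat, injective iota /\ forall t, ~ injects_below (iota t).1.
Proof.
case: (pselect (exists y, injects_below y)) => [some_y|none].
  have [ys [G [G_inj G_below]] ys_min] := wf_minimal ltW_wf some_y.
  by exists G; split=> // t; apply: ys_min.
exists (fun t => (t, 0)); split; first by move=> a b [].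
by move=> t t_inj; apply: none; exists t.
Qed.

Lemma exists_fold_into_segment y0 y : ltW y0 y ->
  exists h : T * nat * nat -> T * nat,
    injective h /\ forall a, ltW a.1.1 y \/ a.1.1 = y -> ltW (h a).1 y.
Proof.
move=> y0y.
pose h (a : T * nat * nat) :=
  if pselect (a.1.1 = y) then (y0, pickle (true, a.1.2, a.2))
  else (a.1.1, pickle (false, a.1.2, a.2)).
exists h; split => [[[z j] k] [[z' j'] k']|[[z j] k] /=]; rewrite /h /=.
  case: pselect => ez; case: pselect => ez' [].
  - by move=> /(pcan_inj pickleK) [-> ->]; rewrite ez ez'.
  - by move=> _ /(pcan_inj pickleK).
  - by move=> _ /(pcan_inj pickleK).
  - by move=> -> /(pcan_inj pickleK) [-> ->].
by case: pselect => [//|ne [//|]].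
Qed.

Section Labels.
Variables (iota : T -> T * nat) (n : T -> nat) (t : T).
Hypotheses (iota_inj : injective iota)
  (t_labels : injects_into_labels T (fun a b => lexlt ltW (iota a) (iota b)) n t).

Lemma injects_below_of_labels y0 : ltW y0 (iota t).1 -> injects_below (iota t).1.
Proof.
move=> y0y; have [G [G_inj G_below]] := t_labels.
have [h [h_inj h_below]] := exists_fold_into_segment y0y.
exists (fun s => h (iota (G s).1, (G s).2)); split.
  move=> s s' /h_inj [/iota_inj e1 e2]; apply: G_inj.
  exact: injective_projections.
by move=> s; apply: h_below; case: (G_below s) => -[ltsy|[esy _]] _; [left|right].
Qed.

Lemma finite_of_labels : ~ (exists y0, ltW y0 (iota t).1) -> finite_type T.
Proof.
move=> t_min; have [G [G_inj G_below]] := t_labels.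
set y := (iota t).1; set m := (iota t).2.
have in_column s : (iota (G s).1).1 = y /\ (iota (G s).1).2 < m.
  by case: (G_below s) => -[ltsy|//] _; case: t_min; exists (iota (G s).1).1.
have column_inj a b :
    (iota a).1 = y -> (iota b).1 = y -> (iota a).2 = (iota b).2 -> a = b.
  by move=> ea eb e2; apply: iota_inj; apply: injective_projections; rewrite ?ea ?eb.
have [N nN] := @bounded_on_injective_section _ (fun a => (iota a).1 = y)
  (fun a => (iota a).2) n m column_inj.
exists (N * m), (fun s => (G s).2 * m + (iota (G s).1).2); split.
  move=> s s' /edivn_unique [||e2 e1]; try exact: (proj2 (in_column _)).
  apply: G_inj; apply: injective_projections => //; apply: iota_inj.
  apply: injective_projections => //.
  by rewrite (proj1 (in_column s)) (proj1 (in_column s')).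
move=> s; have [ys lts] := in_column s.
have GN : (G s).2 < N := ltn_trans (proj2 (G_below s)) (nN _ ys lts).
apply: (@leq_trans ((G s).2.+1 * m)); first by rewrite mulSnr ltn_add2l.
by rewrite leq_mul2r GN orbT.
Qed.

End Labels.

Lemma exists_order_small_below : ~ finite_type T -> exists lt : T -> T -> Prop,
  [/\ well_founded lt, trichotomous lt & forall n, small_below T lt n].
Proof.
move=> T_infinite.
have [iota [iota_inj iota_short]] := exists_injection_into_short_segments.
exists (fun s t => lexlt ltW (iota s) (iota t)); split.
- exact: wf_inverse_image (wf_lexlt ltW_wf).
- exact: trichotomous_preim iota_inj (trichotomous_lexlt ltW_tri).
move=> n t t_labels; case: (pselect (exists y0, ltW y0 (iota t).1)) => [[y0 y0y]|t_min].
  exact: iota_short t (injects_below_of_labels iota_inj t_labels y0y).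
exact: T_infinite (finite_of_labels iota_inj t_labels t_min).
Qed.

End CardinalOrder.

Lemma infinite_order_small_below (T : Type) : ~ finite_type T ->
  exists lt : T -> T -> Prop,
    [/\ well_founded lt, trichotomous lt & forall n, small_below T lt n].
Proof.
have [ltW [ltW_wf ltW_tri]] := exists_wf_trichotomous T.
exact: exists_order_small_below ltW_wf ltW_tri.
Qed.

Lemma sval_inj (U : Type) (P : U -> Prop) : injective (@sval U P).
Proof. exact: eq_sig_hprop (fun u => @Prop_irrelevance (P u)). Qed.

Section Structures.
Variables (I : Type) (mu : I -> nat).

Lemma embedding_comp (C1 C2 C3 : structure mu) f g :
  embedding C1 C2 f -> embedding C2 C3 g -> embedding C1 C3 (fun x => g (f x)).
Proof.
move=> [f_inj f_rel] [g_inj g_rel]; split; first by move=> a b /g_inj /f_inj.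
by move=> i x; apply: iff_trans (f_rel i x) (g_rel i _).
Qed.

Lemma embeds_trans (C1 C2 C3 : structure mu) :
  embeds C1 C2 -> embeds C2 C3 -> embeds C1 C3.
Proof.
by move=> [f f_emb] [g g_emb]; exists (fun x => g (f x)); apply: embedding_comp.
Qed.

Lemma age_sub_embeds (C1 C2 : structure mu) (A : finstr mu -> Prop) :
  embeds C1 C2 -> age_sub C2 A -> age_sub C1 A.
Proof. by move=> C12 C2A s sC1; apply/C2A; apply: embeds_trans sC1 C12. Qed.

Lemma ideal_fsize0 (A : finstr mu -> Prop) : (forall i, 0 < mu i) -> ideal A ->
  forall s, fsize s = 0 -> A s.
Proof.
move=> mu_gt0 [[b Ab] [A_down _]] [m r] /= m0; subst m; apply: A_down Ab.
have no_point : 'I_0 -> False by case.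
exists (fun k => match no_point k with end); split; first by move=> k; case: no_point.
by move=> i x; case: (no_point (x (Ordinal (mu_gt0 i)))).
Qed.

(* Structures whose carrier is a subset of a fixed type of labels U, so that
   the stages of a construction can be compared by inclusion and united. *)
Definition presentation (U : Type) :=
  ((U -> Prop) * (forall i, ('I_(mu i) -> U) -> Prop))%type.

Definition struct_of (U : Type) (d : presentation U) : structure mu :=
  @Struct I mu {u | d.1 u} (fun i t => d.2 i (fun k => sval (t k))).

Definition subpres (U : Type) (d1 d2 : presentation U) :=
  (forall u, d1.1 u -> d2.1 u) /\
  (forall i t, (forall k, d1.1 (t k)) -> d1.2 i t <-> d2.2 i t).

Lemma subpres_refl (U : Type) (d : presentation U) : subpres d d.
Proof. by []. Qed.

Lemma subpres_trans (U : Type) (d1 d2 d3 : presentation U) :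
  subpres d1 d2 -> subpres d2 d3 -> subpres d1 d3.
Proof.
move=> [dom12 rel12] [dom23 rel23].
split=> [u d1u|i t t1]; first exact: dom23 _ (dom12 _ d1u).
by apply: iff_trans (rel12 i t t1) (rel23 i t (fun k => dom12 _ (t1 k))).
Qed.

Lemma subpres_embeds (U : Type) (d1 d2 : presentation U) :
  subpres d1 d2 -> embeds (struct_of d1) (struct_of d2).
Proof.
move=> [dom12 rel12]; exists (fun c => exist _ (sval c) (dom12 _ (svalP c))).
split; first by move=> a b [] /sval_inj.
by move=> i x; apply: rel12 => k; apply: svalP.
Qed.

End Structures.

Section ChainUnion.
Variables (I : Type) (mu : I -> nat) (U J : Type) (d : J -> presentation mu U).
Hypothesis d_chain : forall j j', subpres (d j) (d j') \/ subpres (d j') (d j).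

Definition union_pres : presentation mu U :=
  (fun u => exists j, (d j).1 u,
   fun i t => exists j, (forall k, (d j).1 (t k)) /\ (d j).2 i t).

Lemma subpres_union j : subpres (d j) union_pres.
Proof.
split=> [u du|i t tj]; first by exists j.
split=> [R|[j' [tj' R]]]; first by exists j.
by case: (d_chain j j') => -[_ rel_eq]; [apply/(rel_eq i t tj)|apply/(rel_eq i t tj')].
Qed.

Lemma union_tuple_in_member m (t : 'I_m -> U) (j0 : J) :
  (forall k, union_pres.1 (t k)) -> exists j, forall k, (d j).1 (t k).
Proof.
move=> t_in.
suff prefix l : l <= m -> exists j, forall k : 'I_m, k < l -> (d j).1 (t k).
  by have [j tj] := prefix m (leqnn m); exists j => k; apply: tj.
elim: l => [|l IH] lm; first by exists j0.
have [j tj] := IH (ltnW lm); have [j' tj'] := t_in (Ordinal lm).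
have last_k (k : 'I_m) : k < l.+1 -> k < l \/ k = Ordinal lm.
  by rewrite ltnS leq_eqVlt => /orP[/eqP kl|]; [right; apply: val_inj|left].
case: (d_chain j j') => -[dom_incl _]; [exists j'|exists j] => k /last_k [/tj|->] //;
  exact: dom_incl.
Qed.

Lemma age_sub_union (A : finstr mu -> Prop) : (forall i, 0 < mu i) -> ideal A ->
  (forall j, age_sub (struct_of (d j)) A) -> age_sub (struct_of union_pres) A.
Proof.
move=> mu_gt0 A_ideal d_age s [e [e_inj e_rel]].
case: (posnP (fsize s)) => [/ideal_fsize0|s_gt0]; first exact.
have [j0 _] := svalP (e (Ordinal s_gt0)).
have [j ej] := union_tuple_in_member j0 (fun k => svalP (e k)).
apply: (d_age j); exists (fun k => exist _ (sval (e k)) (ej k)); split.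
  by move=> a b [] /sval_inj /e_inj.
move=> i x; apply: iff_trans (e_rel i x) _.
by apply: iff_sym; apply: (proj2 (subpres_union j)) => k; apply: ej.
Qed.

End ChainUnion.

Section Pullback.
Variables (I : Type) (mu : I -> nat) (U : Type) (D : structure mu).
Variable phi : U -> option D.
Hypothesis phi_inj : forall u v e, phi u = Some e -> phi v = Some e -> u = v.

Definition pullback : presentation mu U :=
  (fun u => exists e, phi u = Some e,
   fun i t => exists2 t' : 'I_(mu i) -> D,
     forall k, phi (t k) = Some (t' k) & @Defs.rel I mu D i t').

Lemma pullback_rel i t t' :
  (forall k, phi (t k) = Some (t' k)) -> pullback.2 i t <-> @Defs.rel I mu D i t'.
Proof.
move=> tt'; split=> [[t'' tt'' R]|R]; last by exists t'.
suff -> : t' = t'' by [].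
by apply: funext => k; move: (tt' k); rewrite tt'' => -[].
Qed.

Definition pullback_map (c : struct_of pullback) : D := sval (cid (svalP c)).

Lemma pullback_mapE c : phi (sval c) = Some (pullback_map c).
Proof. by rewrite /pullback_map; case: cid. Qed.

Lemma pullback_embeds : embeds (struct_of pullback) D.
Proof.
exists pullback_map; split.
  move=> a b e; apply: sval_inj; apply: (phi_inj (e := pullback_map a));
    by rewrite pullback_mapE ?e.
by move=> i x; apply: pullback_rel => k; apply: pullback_mapE.
Qed.

Lemma embeds_pullback (S : structure mu) (g : S -> D) : embedding S D g ->
  (forall s, exists u, phi u = Some (g s)) -> embeds S (struct_of pullback).
Proof.
move=> [g_inj g_rel] g_hit.
pose psi s : struct_of pullback :=
  exist _ (sval (cid (g_hit s))) (ex_intro _ (g s) (svalP (cid (g_hit s)))).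
have psiE s : phi (sval (psi s)) = Some (g s) by apply: svalP (cid (g_hit s)).
exists psi; split.
  by move=> a b /(f_equal sval) e; apply: g_inj; apply: Some_inj;
     rewrite -psiE e psiE.
by move=> i x; apply: iff_trans (g_rel i x) (iff_sym (pullback_rel _)).
Qed.

End Pullback.

Section Extension.
Variables (I : Type) (mu : I -> nat) (X : Type) (x : X) (b : finstr mu).
Variable d : presentation mu (X * nat).
Hypothesis d_fresh : forall u, d.1 u -> u.1 <> x.
Variables (D : structure mu) (f : struct_of d -> D) (g : fs_struct b -> D).
Hypotheses (f_emb : embedding (struct_of d) D f) (g_emb : embedding (fs_struct b) D g).

(* The point k of b gets the label (x, k), unless g k is already the image of
   an old point. *)
Definition glue (u : X * nat) : option D :=
  if pselect (d.1 u) is left du then Some (f (exist _ u du)) else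
  if pselect (u.1 = x) is right _ then None else
  if pselect (u.2 < fsize b) is left k_lt then
    if pselect (exists c, f c = g (Ordinal k_lt)) is left _ then None
    else Some (g (Ordinal k_lt))
  else None.

Lemma glue_old u (du : d.1 u) : glue u = Some (f (exist _ u du)).
Proof.
by rewrite /glue; case: pselect => [du'|//]; rewrite (Prop_irrelevance du du').
Qed.

Lemma glue_new (k : 'I_(fsize b)) :
  ~ (exists c, f c = g k) -> glue (x, val k) = Some (g k).
Proof.
move=> k_new; rewrite /glue; case: pselect => [/d_fresh //|_].
case: pselect => [_|//]; case: pselect => [k_lt|]; last by rewrite ltn_ord.
have -> : Ordinal k_lt = k by apply: val_inj.
by case: pselect.
Qed.

Lemma glueP u e : glue u = Some e ->
  (exists du : d.1 u, e = f (exist _ u du)) \/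
  (u.1 = x /\ exists k_lt : u.2 < fsize b,
     e = g (Ordinal k_lt) /\ ~ exists c, f c = e).
Proof.
rewrite /glue; case: pselect => [du [<-]|_]; first by left; exists du.
case: pselect => [ux|//]; case: pselect => [k_lt|//].
by case: pselect => [//|k_new [<-]]; right; split=> //; exists k_lt.
Qed.

Lemma glue_inj u v e : glue u = Some e -> glue v = Some e -> u = v.
Proof.
move=> /glueP [[du ->]|[ux [ku [-> u_new]]]] /glueP [[dv ev]|[vx [kv [ev v_new]]]].
- by move/(proj1 f_emb): ev => [].
- by case: v_new; exists (exist _ u du).
- by case: u_new; exists (exist _ v dv).
- move/(proj1 g_emb): ev => [uv2].
  by apply: injective_projections; rewrite ?ux ?vx.
Qed.

Lemma exists_extension : exists d',
  [/\ subpres d d', (forall u, d'.1 u -> d.1 u \/ (u.1 = x /\ u.2 < fsize b)),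
      embeds (struct_of d') D & embeds (fs_struct b) (struct_of d')].
Proof.
exists (pullback glue); split.
- split=> [u du|i t td]; first by exists (f (exist _ u du)); apply: glue_old.
  apply: iff_trans (proj2 f_emb i (fun k => exist _ (t k) (td k))) _.
  by apply: iff_sym; apply: pullback_rel => k; apply: glue_old.
- move=> u [e /glueP [[du _]|[ux [k_lt _]]]]; [by left|by right].
- exact: pullback_embeds glue_inj.
apply: (embeds_pullback (phi := glue) g_emb) => k.
case: (pselect (exists c, f c = g k)) => [[c fc]|k_new].
  by exists (sval c); rewrite -fc; case: c {fc} => u du; apply: glue_old.
by exists (x, val k); apply: glue_new.
Qed.

End Extension.

Section Construction.
Variables (I : Type) (mu : I -> nat) (A : finstr mu -> Prop).
Hypotheses (mu_gt0 : forall i, 0 < mu i) (A_ideal : ideal A).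
Hypothesis A_ext : extension_property A.
Variables (X : Type) (lt : X -> X -> Prop) (B : X -> finstr mu).
Hypotheses (lt_wf : well_founded lt) (lt_tri : trichotomous lt).
Hypothesis B_in : forall x, A (B x).
Hypothesis B_small : small_below (isotype_in A) lt (fun x => fsize (B x)).

Local Notation U := (X * nat)%type.
Local Notation n x := (fsize (B x)).

Definition admissible x (d : presentation mu U) :=
  [/\ card_lt (struct_of d) A, age_sub (struct_of d) A & forall u, d.1 u -> u.1 <> x].

Definition extension_at x (d d' : presentation mu U) :=
  [/\ subpres d d', (forall u, d'.1 u -> d.1 u \/ (u.1 = x /\ u.2 < n x)),
      age_sub (struct_of d') A & embeds (fs_struct (B x)) (struct_of d')].

Lemma exists_extension_at x d : admissible x d -> exists d', extension_at x d d'.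
Proof.
case=> d_small d_age d_fresh.
have [D [D_age [[f f_emb] [g g_emb]]]] := A_ext d_small d_age (B_in x).
have [d' [dd' d'_labels d'D b_d']] := exists_extension d_fresh f_emb g_emb.
by exists d'; split=> //; apply: age_sub_embeds d'D D_age.
Qed.

(* The fallback branch only makes the recursion total: every stage turns out
   to be admissible. *)
Definition stage x (rec : forall y, lt y x -> presentation mu U) : presentation mu U :=
  let below := union_pres (fun p : {y | lt y x} => rec (sval p) (svalP p)) in
  if pselect (admissible x below) is left adm then sval (cid (exists_extension_at adm))
  else below.

Definition build : X -> presentation mu U := Fix lt_wf _ stage.

Definition below x := union_pres (fun p : {y | lt y x} => build (sval p)).

Lemma build_extends x : admissible x (below x) -> extension_at x (below x) (build x).
Proof.
move=> adm; rewrite /build Fix_eq -/build; last first.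
  move=> y r r' rr'; suff -> : r = r' by [].
  by apply: functional_extensionality_dep => z; apply: functional_extensionality_dep.
by rewrite /stage -/(below x); case: pselect => // adm'; case: cid.
Qed.

Definition stage_inv x :=
  [/\ forall u, (build x).1 u -> (lt u.1 x \/ u.1 = x) /\ u.2 < n u.1,
      forall y, lt y x -> subpres (build y) (build x),
      age_sub (struct_of (build x)) A &
      embeds (fs_struct (B x)) (struct_of (build x))].

Lemma build_chain y z : stage_inv y -> stage_inv z ->
  subpres (build y) (build z) \/ subpres (build z) (build y).
Proof.
move=> [_ y_sub _ _] [_ z_sub _ _].
case: (lt_tri y z) => [ltyz|[<-|ltzy]]; [left; exact: z_sub|left|right; exact: y_sub].
exact: subpres_refl.
Qed.

Lemma stage_invariant x : stage_inv x.
Proof.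
elim/(well_founded_ind lt_wf): x => x IH.
have chain (p q : {y | lt y x}) := build_chain (IH _ (svalP p)) (IH _ (svalP q)).
have below_labels u : (below x).1 u -> lt u.1 x /\ u.2 < n u.1.
  move=> [[y ltyx] /= du]; have [labels _ _ _] := IH y ltyx.
  have [[ltuy|->] u_lt] := labels u du; split=> //.
  exact: (wf_trichotomous_trans lt_wf lt_tri ltuy ltyx).
have adm : admissible x (below x).
  split.
  - move=> [G G_inj]; apply: (B_small (x := x)); exists (fun t => sval (G t)); split.
      by move=> a b /sval_inj /G_inj.
    by move=> t; apply: below_labels; apply: svalP.
  - apply: (age_sub_union chain mu_gt0 A_ideal) => -[y ltyx].
    by have [_ _ y_age _] := IH y ltyx.
  - move=> u /below_labels [ltux _] ux; rewrite ux in ltux.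
    exact: (wf_asym lt_wf ltux ltux).
have [sub labels x_age x_emb] := build_extends adm; split=> //.
  by move=> u /labels [/below_labels [ltux u_lt]|[-> u_lt]]; split=> //; [left|right].
move=> y ltyx; apply: subpres_trans sub.
exact: (subpres_union chain (exist _ y ltyx)).
Qed.

Lemma exists_structure_containing_family :
  exists C : structure mu, age_sub C A /\ forall x, embeds (fs_struct (B x)) C.
Proof.
have chain y z := build_chain (stage_invariant y) (stage_invariant z).
exists (struct_of (union_pres build)); split.
  apply: (age_sub_union chain mu_gt0 A_ideal) => x.
  by have [_ _ x_age _] := stage_invariant x.
move=> x; have [_ _ _ x_emb] := stage_invariant x.
exact: (embeds_trans x_emb (subpres_embeds (subpres_union chain x))).
Qed.

End Construction.

Section Isotypes.
Variables (I : Type) (mu : I -> nat) (A : finstr mu -> Prop).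

Definition isotype_rep (t : isotype_in A) : finstr mu := sval (cid (svalP t)).

Lemma isotype_repP t : A (isotype_rep t) /\ sval t = fiso (isotype_rep t).
Proof. by rewrite /isotype_rep; case: cid. Qed.

Definition isotype_of s (As : A s) : isotype_in A :=
  exist _ (fiso s) (ex_intro _ s (conj As erefl)).

Lemma embeds_isotype_rep s (As : A s) :
  embeds (fs_struct s) (fs_struct (isotype_rep (isotype_of As))).
Proof.
have [_ /= iso_rep] := isotype_repP (isotype_of As).
have [f [f_emb _]] : fiso s (isotype_rep (isotype_of As)).
  by rewrite iso_rep; exists id; split=> [|y]; [split|exists y].
by exists f.
Qed.

Lemma representable_of_finite_isotypes : ideal A ->
  finite_type (isotype_in A) -> representable A.
Proof.
move=> [[s0 As0] [A_down A_directed]] [M [f [f_inj f_lt]]].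
suff [u [Au u_top]] : exists u, A u /\ forall t, f t < M -> fle (isotype_rep t) u.
  exists (fs_struct u) => s; split=> [/A_down|As]; first exact.
  exact: embeds_trans (embeds_isotype_rep As) (u_top _ (f_lt _)).
elim: M {f_lt} => [|m [u [Au u_top]]]; first by exists s0.
case: (pselect (exists t, f t = m)) => [[t ft]|no_t]; last first.
  exists u; split=> // t; rewrite ltnS leq_eqVlt => /orP[/eqP ft|]; last exact: u_top.
  by case: no_t; exists t.
have [w [Aw [uw tw]]] := A_directed u (isotype_rep t) Au (proj1 (isotype_repP t)).
exists w; split=> // t'; rewrite ltnS leq_eqVlt => /orP[/eqP ft'|lt_t'm].
  by rewrite (f_inj t' t) ?ft ?ft'.
exact: embeds_trans (u_top t' lt_t'm) uw.
Qed.

End Isotypes.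

Theorem lemma1 (I : Type) (mu : I -> nat) (hmu : forall i, 0 < mu i)
  (A : finstr mu -> Prop) :
  ideal A -> extension_property A -> representable A.
Proof.
move=> A_ideal A_ext.
case: (pselect (finite_type (isotype_in A))) => [fin|inf].
  exact: representable_of_finite_isotypes.
have [lt [lt_wf lt_tri small]] := infinite_order_small_below inf.
have [C [C_age C_univ]] := exists_structure_containing_family hmu A_ideal A_ext
  lt_wf lt_tri (fun t => proj1 (isotype_repP t)) (small _).
exists C => s; split=> [/C_age //|As].
exact: embeds_trans (embeds_isotype_rep As) (C_univ _).
Qed.
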